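(* Let $d,n\in\mathbb{N}$ and $N=\binom{n+d-1}{n}$. (I) If the matrix $(v_1,\dots,v_N)\in\mathbb{R}^{d\times N}$ is random with a density with respect to Lebesgue measure on $\mathbb{R}^{d\times N}$ (in particular such $v_i$ exist), then almost surely the following holds: for every polynomial $p\in\mathbb{R}[x_1,\dots,x_d]$ of degree $n$ (order $n$), $p\equiv0$ if and only if $p(\lambda v_i)=0$ for all $\lambda\in\mathbb{R}$ and all $i=1,\dots,N$. (II) The number $N$ is optimal: for any $M<N$ and any $v_1,\dots,v_M\in\mathbb{R}^d$ there exists a non-zero polynomial $p\in\mathbb{R}[x_1,\dots,x_d]$ of degree $n$ such that $p(\lambda v_i)=0$ for all $\lambda\in\mathbb{R}$ and all $i=1,\dots,M$. *)

From HB Require Import structures.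
From mathcomp Require Import all_boot all_order all_algebra.
From mathcomp Require Import all_classical all_reals all_analysis.
From mathcomp Require mpoly.
Import (canonicals, coercions) mpoly.
Set Implicit Arguments.
Unset Strict Implicit.
Unset Printing Implicit Defensive.
Import Order.TTheory GRing.Theory Num.Theory.
Local Open Scope classical_set_scope.
Local Open Scope ring_scope.

Notation rpoly d R := (mpoly.mpoly d R).

(** [msize_ p] = 1 + total degree of p (0 if p = 0): multinomials' msize. *)
Definition msize_ (d : nat) (R : realType) (p : rpoly d R) : nat :=
  mpoly.msize p.

Definition eval_line (d : nat) (R : realType) (p : rpoly d R)
    (lam : R) (v : d.-tuple R) : R :=
  mpoly.meval (fun j : 'I_d => lam * tnth v j) p.

Definition vanishes_on_lines (d M : nat) (R : realType) (p : rpoly d R)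
    (V : M.-tuple (d.-tuple R)) : Prop :=
  forall (lam : R) (i : 'I_M), eval_line p lam (tnth V i) = 0.

Definition determining (d n N : nat) (R : realType)
    (V : N.-tuple (d.-tuple R)) : Prop :=
  forall p : rpoly d R, (msize_ p <= n.+1)%N ->
    (p = 0 <-> vanishes_on_lines p V).

(** The k-fold product of a (set function) measure mu on T, as a set function
    on k-tuples, defined by iterated integration of sections exactly as
    MathComp-Analysis' binary product [m1 \x m2]:
      mu^{(0)} = dirac at the empty tuple,
      mu^{(k+1)}(A) = \int mu^{(k)}({t | x :: t \in A}) dmu(x). *)
Fixpoint tuple_measure (dT : measure_display) (T : measurableType dT)
    (R : realType) (mu : set T -> \bar R) (k : nat)
    : set (k.-tuple T) -> \bar R :=
  match k return set (k.-tuple T) -> \bar R with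
  | 0%N => fun A => if `[< A [tuple] >] then 1%E else 0%E
  | k'.+1 => fun A =>
      (\int[mu]_x tuple_measure mu [set t : k'.-tuple T | A (cons_tuple x t)])%E
  end.

Definition lebesgue_vec (R : realType) (d : nat) : set (d.-tuple R) -> \bar R :=
  @tuple_measure _ (measurableTypeR R) R (@lebesgue_measure R) d.

Definition lebesgue_mat (R : realType) (d N : nat)
    : set (N.-tuple (d.-tuple R)) -> \bar R :=
  @tuple_measure _ (d.-tuple (measurableTypeR R)) R (@lebesgue_vec R d) N.

Definition has_density (dO : measure_display) (Omega : measurableType dO)
    (dS : measure_display) (S : measurableType dS) (R : realType)
    (P : probability Omega R) (X : Omega -> S) (lam : set S -> \bar R) : Prop :=
  exists f : S -> R,
    (forall s, 0 <= f s) /\ measurable_fun setT f /\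
    forall A : set S, measurable A ->
      P (X @^-1` A) = (\int[lam]_(s in A) (f s)%:E)%E.

From HB Require Import structures.
From mathcomp Require Import all_boot all_order all_algebra.
From mathcomp Require Import all_classical all_reals all_analysis.
From mathcomp Require Import measurable_realfun.
From mathcomp Require mpoly.
Import -(notations) mpoly.
Import Order.TTheory GRing.Theory Num.Theory HBNNSimple.
Local Open Scope classical_set_scope.
Local Open Scope ring_scope.

(* The degree-n monomials x^a in d variables are N = 'C(n + d - 1, n) many;
   for points v_1, ..., v_M let E(V) be the M x N matrix (v_i^a).  For p of
   degree at most n, p(lam v) is a polynomial in lam whose coefficients are
   the values at v of the homogeneous components p_k of p, so p vanishes on
   the lines R v_i iff every p_k vanishes at every v_i; multiplying p_k by
   x_1^(n-k) reduces this to homogeneous polynomials of degree n, that is to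
   coefficient vectors in the kernel of E(V).  Hence V is determining when
   det E(V) <> 0, while for M < N a nonzero kernel vector of E(V) is a
   nonzero vanishing polynomial (II).  Adding the points one at a time, each
   outside the zero set of a kernel polynomial, yields V with det E(V) <> 0.
   So det E(V) is a nonzero polynomial in the coordinates of V; by induction
   over the coordinates (Fubini) its zero set is Lebesgue-null, and a random
   V with a density avoids it almost surely. *)

Local Notation "d .-homog" := (@ishomog1 _ _ d mdeg)
  (at level 1, format "d .-homog") : form_scope.

(* [tuple_measure] is only a set function (it is not known to be a measure),
   so null sets are taken in the inner sense and the needed facts about the
   integral are derived from its definition. *)
Definition inner_null {dT : measure_display} {T : measurableType dT}
    {R : realType} (mu : set T -> \bar R) (E : set T) :=
  forall B, measurable B -> B `<=` E -> mu B = 0%E.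

Definition null_zeros {dT : measure_display} {T : measurableType dT}
    {R : realType} (mu : set T -> \bar R) (G : (T -> R) -> Prop) :=
  forall g, G g -> (exists x, g x != 0) -> inner_null mu [set x | g x = 0].

Section integral_inner_null.
Context {dT : measure_display} {T : measurableType dT} {R : realType}.
Context {mu : set T -> \bar R} {E : set T} (muE : inner_null mu E).

Lemma sintegral_inner_null (h : {nnsfun T >-> R}) :
  (forall x, h x != 0 -> E x) -> sintegral mu h = 0%E.
Proof.
move=> hE; apply: fsbig1 => y _.
have [->|y0] := eqVneq y 0; first by rewrite mul0e.
by rewrite muE ?mule0 // => x /= hx; apply: hE; rewrite hx.
Qed.

Lemma sup_sintegral_inner_null (f : T -> \bar R) :
  (forall x, (0 <= f x)%E) -> (forall x, f x != 0%E -> E x) ->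
  ereal_sup [set sintegral mu h | h in
    [set h : {nnsfun T >-> R} | forall x, ((h x)%:E <= f x)%E]] = 0%E.
Proof.
move=> f0 fE; rewrite [X in ereal_sup X](_ : _ = [set 0%E]) ?ereal_sup1 //.
apply/seteqP; split => [_ [h hf <-]|_ ->] /=.
  apply: (sintegral_inner_null h) => x hx; apply: fE; rewrite gt_eqF //.
  by apply: lt_le_trans (hf x); rewrite lte_fin lt0r hx /=.
by exists nnsfun0; [|apply: (sintegral_inner_null nnsfun0) => x /=; rewrite eqxx].
Qed.

Lemma integral_inner_null (D : set T) (f : T -> \bar R) :
  (forall x, D x -> f x != 0%E -> E x) -> (\int[mu]_(x in D) f x = 0)%E.
Proof.
move=> fE; have fDE x : (f \_ D) x != 0%E -> E x.
  by rewrite patchE; case: ifPn => [/set_mem|_]; [exact: fE|rewrite eqxx].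
rewrite /integral !sup_sintegral_inner_null ?sube0 // => x.
- rewrite funenegE => hx; apply: fDE.
  by apply: contra hx => /eqP ->; rewrite oppe0 maxxx.
- rewrite funeposE => hx; apply: fDE.
  by apply: contra hx => /eqP ->; rewrite maxxx.
Qed.

End integral_inner_null.

Section fun_ring_closed.
Context {R : pzRingType} {U : Type}.

Definition fun_ring_closed (P : (U -> R) -> Prop) : Prop :=
  [/\ forall c, P (cst c), forall f g, P f -> P g -> P (f \+ g)
    & forall f g, P f -> P g -> P (f \* g)].

Context {P : (U -> R) -> Prop} (closedP : fun_ring_closed P).

Lemma fun_ring_closed_sum (I : Type) (r : seq I) (F : I -> U -> R) :
  (forall i, P (F i)) -> P (fun u => \sum_(i <- r) F i u).
Proof.
case: closedP => Pc PD _ PF; rewrite -fct_sumE.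
by apply: big_ind; [exact: Pc 0|exact: PD|move=> i _; exact: PF].
Qed.

Lemma fun_ring_closed_prod (I : Type) (r : seq I) (F : I -> U -> R) :
  (forall i, P (F i)) -> P (fun u => \prod_(i <- r) F i u).
Proof.
case: closedP => Pc _ PM PF; rewrite -fct_prodE.
by apply: big_ind; [exact: Pc 1|exact: PM|move=> i _; exact: PF].
Qed.

Lemma fun_ring_closed_exp (f : U -> R) (e : nat) : P f -> P (fun u => f u ^+ e).
Proof.
case: closedP => Pc _ PM Pf; elim: e => [|e IH]; first exact: Pc 1.
by under [fun u => _]funext do rewrite exprS; exact: PM.
Qed.

End fun_ring_closed.

Section sectional.
Context {T : Type} {R : pzRingType} {G : (T -> R) -> Prop}.

(* F is in G as a function of each coordinate, the others being fixed. *)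
Fixpoint sectional (k : nat) : (k.-tuple T -> R) -> Prop :=
  match k with
  | 0 => fun _ => True
  | k'.+1 => fun F => (forall t, G (fun x => F (cons_tuple x t)))
                   /\ (forall x, sectional k' (fun t => F (cons_tuple x t)))
  end.

Hypothesis closedG : fun_ring_closed G.

Lemma sectional_ring_closed k : fun_ring_closed (sectional k).
Proof.
case: closedG => Gc GD GM; elim: k => [|k [Sc SD SM]] //=.
split=> [c|f g [Gf Sf] [Gg Sg]|f g [Gf Sf] [Gg Sg]].
- by split=> [t|x]; [exact: Gc|exact: Sc].
- by split=> [t|x]; [exact: GD|exact: SD].
- by split=> [t|x]; [exact: GM|exact: SM].
Qed.

Lemma sectional_tnth (g : T -> R) {k} (i : 'I_k) :
  G g -> sectional k (fun t => g (tnth t i)).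
Proof.
have [Gc _ _] := closedG; move=> Gg; elim: k i => [[]//|k IH] i /=.
have [Sc _ _] := sectional_ring_closed k.
case: (unliftP ord0 i) => [j ->|->]; split=> [t|x].
- by under [fun x => _]funext do rewrite tnthS; exact: Gc.
- by under [fun t => _]funext do rewrite tnthS; exact: IH.
- by under [fun x => _]funext do rewrite tnth0.
- by under [fun t => _]funext do rewrite tnth0; exact: Sc.
Qed.

End sectional.

Arguments sectional {T R} G k.

Section sectional_null.
Context {dT : measure_display} {T : measurableType dT} {R : realType}.

Lemma sectional_null_zeros {mu : set T -> \bar R} {G k} :
  null_zeros mu G -> null_zeros (tuple_measure (k:=k) mu) (sectional G k).
Proof.
move=> nullG; elim: k => [|k IH] F.
  move=> _ [t Ft] B _ BZ /=; rewrite asboolF // => /BZ /=.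
  by rewrite -(tuple0 t) => /eqP; rewrite (negbTE Ft).
case=> [GF SF] [t0]; case/tupleP: t0 => x0 u0 Fxu0 B mB BZ /=.
apply: (integral_inner_null (nullG _ (GF u0) _)); first by exists x0.
(* off the null set where F (x :: u0) = 0, the section of F at x is a nonzero
   sectional function, whose zero set is null by induction *)
move=> x _ /eqP m_neq0; apply: contrapT => /eqP Fxu0_neq0; apply: m_neq0.
apply: (IH _ (SF x)); first by exists u0.
  by rewrite -[X in measurable X]setTI; apply: measurable_cons.
by move=> t /BZ.
Qed.

End sectional_null.

Lemma finite_poly_roots {R : idomainType} {p : {poly R}} :
  p != 0 -> finite_set [set x | root p x].
Proof.
move=> p0; apply: contrapT => /(infinite_set_fset (size p)) [B BA leB].
have rB : all (root p) (finmap.enum_fset B) by apply/allP => x xB; exact: BA.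
by have := max_poly_roots p0 rB (finmap.fset_uniq B); rewrite ltnNge leB.
Qed.

Lemma poly_nonroot {R : idomainType} {p : {poly R}} :
  infinite_set [set: R] -> p != 0 -> exists x, ~~ root p x.
Proof.
move=> infR p0; apply: contrapT => noroot; apply: infR.
apply: (sub_finite_set _ (finite_poly_roots p0)) => x _.
by apply: contrapT => nr; apply: noroot; exists x; apply/negP.
Qed.

Lemma infinite_num (R : numDomainType) : infinite_set [set: R].
Proof.
move=> /(finite_preimage (f := fun n : nat => n%:R)) finN; apply: infinite_nat.
by apply: finN => m n _ _ /eqP; rewrite eqr_nat => /eqP.
Qed.

Definition polyfun {R : nzRingType} (g : R -> R) :=
  exists p : {poly R}, g =1 horner p.

Lemma polyfun_ring_closed (R : comNzRingType) : fun_ring_closed (@polyfun R).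
Proof.
split=> [c|f g [p fp] [q gq]|f g [p fp] [q gq]].
- by exists c%:P => x; rewrite hornerC.
- by exists (p + q) => x; rewrite hornerD /= fp gq.
- by exists (p * q) => x; rewrite hornerM /= fp gq.
Qed.

Lemma polyfun_id (R : nzRingType) : @polyfun R id.
Proof. by exists 'X => x; rewrite hornerX. Qed.

Lemma polyfun_null_zeros (R : realType) :
  null_zeros (@lebesgue_measure R) polyfun.
Proof.
move=> g [p gp] [x0 gx0] B _ BZ.
have p0 : p != 0 by apply: contraNneq gx0 => p0; rewrite gp p0 horner0.
apply/countable_lebesgue_measure0/finite_set_countable.
by apply: (sub_finite_set _ (finite_poly_roots p0)) => x /BZ /=; rewrite gp => /eqP.
Qed.

Lemma radix_sum_inj {K k : nat} {f g : 'I_k -> nat} :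
  (forall i, f i < K)%N -> (forall i, g i < K)%N ->
  (\sum_(i < k) K ^ i * f i = \sum_(i < k) K ^ i * g i)%N -> f =1 g.
Proof.
elim: k f g => [|k IH] f g fK gK; first by move=> _ [].
have K0 : (0 < K)%N by apply: leq_ltn_trans (fK ord0).
have shift h : (\sum_(i < k) K ^ lift ord0 i * h (lift ord0 i) =
                K * \sum_(i < k) K ^ i * h (lift ord0 i))%N.
  by rewrite big_distrr; apply: eq_bigr => i _ /=; rewrite mulnA -expnS.
rewrite !big_ord_recl !shift !expn0 !mul1n => E.
have fg0 : f ord0 = g ord0.
  move/(congr1 (modn^~ K)): E.
  by rewrite !(addnC (f _)) !(addnC (g _)) !(mulnC K) !modnMDl !modn_small.
move: E; rewrite fg0 => /addnI /eqP; rewrite eqn_pmul2l // => /eqP E.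
have fg_lift :=
  IH (f \o lift ord0) (g \o lift ord0) (fun _ => fK _) (fun _ => gK _) E.
by move=> i; case: (unliftP ord0 i) => [j ->|->] //; exact: fg_lift.
Qed.

Lemma msupp_lt_msize {R : idomainType} {k : nat} {p : rpoly k R} {m} :
  m \in msupp p -> forall i, (m i < msize p)%N.
Proof.
move=> mp i; apply: leq_ltn_trans (msize_mdeg_lt mp).
by rewrite mdegE (bigD1 i) //= leq_addr.
Qed.

Lemma meval_nonroot {R : idomainType} {k : nat} (p : rpoly k R) :
  infinite_set [set: R] -> p != 0 -> exists v : 'I_k -> R, meval v p != 0.
Proof.
(* Kronecker substitution x_i := t ^+ K ^ i, injective on the monomials of p *)
move=> infR p0; pose K := msize p.
pose enc (m : multinom k) := (\sum_(i < k) K ^ i * m i)%N.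
have encK m m' : m \in msupp p -> m' \in msupp p -> enc m = enc m' -> m = m'.
  move=> mp m'p.
  by move/(radix_sum_inj (msupp_lt_msize mp) (msupp_lt_msize m'p))/mnmP.
pose P : {poly R} := \sum_(m <- msupp p) mcoeff m p *: 'X^(enc m).
have Pev t : P.[t] = meval (fun i => t ^+ (K ^ i)) p.
  rewrite mevalE horner_sum; apply: eq_bigr => m _.
  rewrite hornerZ hornerXn -prodrXr; congr (_ * _).
  by apply: eq_bigr => i _; rewrite exprM.
have P0 : P != 0.
  have lead := mlead_supp p0; apply: contraNneq p0 => P0.
  rewrite -mleadc_eq0; move/(congr1 (coefp (enc (mlead p)))): P0.
  rewrite /= coef0 coef_sum (bigD1_seq (mlead p)) ?msupp_uniq //=.
  rewrite coefZ coefXn eqxx mulr1.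
  rewrite big1_seq ?addr0 => [->//|m /andP [m_neq mp]].
  rewrite coefZ coefXn eq_sym; case: eqP => [/(encK _ _ mp lead) m_lead|_].
    by rewrite m_lead eqxx in m_neq.
  by rewrite mulr0.
have [t Pt] := poly_nonroot infR P0.
by exists (fun i => t ^+ (K ^ i)); rewrite -Pev.
Qed.

Lemma meval_homog_scale {R : comNzRingType} {D k : nat} (q : rpoly D R)
    (v : 'I_D -> R) (lam : R) :
  q \is k.-homog -> meval (fun l => lam * v l) q = lam ^+ k * meval v q.
Proof.
move=> hq; rewrite !mevalE mulr_sumr; apply: eq_big_seq => m /(dhomog_mf hq) mk.
rewrite mulrCA; congr (_ * _).
by under eq_bigr do rewrite exprMn; rewrite big_split /= prodrXr -mdegE mk.
Qed.

Lemma msize_homog {R : idomainType} {D k : nat} {q : rpoly D R} :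
  q != 0 -> q \is k.-homog -> msize q = k.+1.
Proof.
move=> q0 hq; rewrite (dhomog_uniq q0 hq (dhomog_msize hq)) prednK //.
by rewrite lt0n mmeasure_poly_eq0.
Qed.

Lemma wide_mx_kernel {F : fieldType} {m k : nat} (A : 'M[F]_(m, k)) :
  (m < k)%N -> exists2 c : 'cV_k, c != 0 & A *m c = 0.
Proof.
move=> mk; have : ~~ row_free A^T.
  by rewrite -row_leq_rank -ltnNge (leq_ltn_trans (rank_leq_col _)).
rewrite -kermx_eq0 => /rowV0Pn [v /sub_kermxP vA v0].
by exists v^T; rewrite ?trmx_eq0 // -[A]trmxK -trmx_mul vA trmx0.
Qed.

Lemma row_free_col_mx {F : fieldType} {m k : nat} {r : 'rV[F]_k}
    {A : 'M[F]_(m, k)} {c : 'cV_k} :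
  row_free A -> A *m c = 0 -> r *m c != 0 -> row_free (col_mx r A).
Proof.
move=> freeA Ac rc; apply: inj_row_free => u; rewrite -[u]hsubmxK mul_row_col.
set a := lsubmx u; set u' := rsubmx u => uA.
have a0 : a = 0.
  move/(congr1 (mulmx^~ c)): uA; rewrite mulmxDl -!mulmxA Ac mulmx0 addr0 mul0mx.
  move/matrixP/(_ 0 0); rewrite mxE big_ord1 [RHS]mxE => /eqP.
  rewrite mulf_eq0 => /orP[/eqP a00|rc0].
    by apply/matrixP => i j; rewrite !ord1 a00 mxE.
  by case/negP: rc; apply/eqP/matrixP => i j; rewrite !ord1 [RHS]mxE; apply/eqP.
move: uA; rewrite a0 mul0mx add0r -(mul0mx _ A) => /(row_free_inj freeA) ->.
by rewrite row_mx0.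
Qed.

Section monomial_matrix.
Context {D n : nat}.

Definition deg_monomials : seq (multinom D) :=
  [seq s2m (val t) | t <- enum (basis D n)].

Local Notation N := (size deg_monomials).

Definition deg_monomial (j : 'I_N) : multinom D := nth mnm0 deg_monomials j.

Lemma mem_deg_monomials m : (m \in deg_monomials) = (mdeg m == n).
Proof. by rewrite basis_cover. Qed.

Lemma mdeg_deg_monomial j : mdeg (deg_monomial j) = n.
Proof. by apply/eqP; rewrite -mem_deg_monomials mem_nth. Qed.

Lemma deg_monomial_inj : injective deg_monomial.
Proof. by move=> i j /eqP; rewrite nth_uniq ?uniq_basis // => /eqP /val_inj. Qed.

Context {R : fieldType}.

Definition mpoly_of_col (c : 'cV[R]_N) : rpoly D R :=
  \sum_j c j 0 *: mpolyX R (deg_monomial j).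

Definition col_of_mpoly (q : rpoly D R) : 'cV[R]_N :=
  \col_j mcoeff (deg_monomial j) q.

Definition monomial_mx {M} (V : M.-tuple (D.-tuple R)) : 'M[R]_(M, N) :=
  \matrix_(i, j) meval (tnth (tnth V i)) (mpolyX R (deg_monomial j)).

Lemma mpoly_of_col_homog c : mpoly_of_col c \is n.-homog.
Proof.
apply: rpred_sum => j _; apply: rpredZ.
by rewrite dhomogX; apply/eqP; apply: mdeg_deg_monomial.
Qed.

Lemma mcoeff_mpoly_of_col c j : mcoeff (deg_monomial j) (mpoly_of_col c) = c j 0.
Proof.
rewrite raddf_sum (bigD1 j) //= mcoeffZ mcoeffX eqxx mulr1 big1 ?addr0 // => i ij.
by rewrite mcoeffZ mcoeffX (inj_eq deg_monomial_inj) (negbTE ij) mulr0.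
Qed.

Lemma mpoly_of_colK : cancel mpoly_of_col col_of_mpoly.
Proof. by move=> c; apply/matrixP => j i; rewrite ord1 mxE mcoeff_mpoly_of_col. Qed.

Lemma mpoly_of_col_eq0 c : (mpoly_of_col c == 0) = (c == 0).
Proof.
apply/eqP/eqP => [c0|->].
  by rewrite -[c]mpoly_of_colK c0; apply/matrixP => i j; rewrite !mxE mcoeff0.
by rewrite /mpoly_of_col big1 // => j _; rewrite mxE scale0r.
Qed.

Lemma col_of_mpolyK {q} : q \is n.-homog -> mpoly_of_col (col_of_mpoly q) = q.
Proof.
move=> hq; apply/mpolyP => m.
have [/eqP|mdeg_m] := eqVneq (mdeg m) n; last first.
  rewrite (dhomog_nemf_coeff hq mdeg_m) raddf_sum big1 // => j _ /=.
  rewrite mcoeffZ mcoeffX; case: eqP => [mj|]; last by rewrite mulr0.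
  by move: mdeg_m; rewrite -mj mdeg_deg_monomial eqxx.
rewrite -mem_deg_monomials => /(nthP mnm0) [j jN <-].
by rewrite (mcoeff_mpoly_of_col _ (Ordinal jN)) mxE.
Qed.

Lemma monomial_mx_mul M (V : M.-tuple (D.-tuple R)) c i :
  (monomial_mx V *m c) i 0 = meval (tnth (tnth V i)) (mpoly_of_col c).
Proof.
rewrite mxE raddf_sum; apply: eq_bigr => j _.
by rewrite /= mxE mevalZ mulrC.
Qed.

Lemma monomial_mx_cons M (w : D.-tuple R) (V : M.-tuple (D.-tuple R)) :
  monomial_mx (cons_tuple w V) = col_mx (monomial_mx [tuple w]) (monomial_mx V).
Proof.
apply/matrixP => i j; rewrite !mxE; case: splitP => [i1|i2] Hi.
  have -> : i = ord0 by apply: val_inj; rewrite /= Hi ord1.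
  by rewrite mxE ord1.
by rewrite mxE (_ : i = lift ord0 i2) ?tnthS //; apply: val_inj.
Qed.

Lemma homog_eq0_monomial_mx {V : N.-tuple (D.-tuple R)} {q} :
  monomial_mx V \in unitmx -> q \is n.-homog ->
  (forall i, meval (tnth (tnth V i)) q = 0) -> q = 0.
Proof.
move=> unitV hq qV; rewrite -(col_of_mpolyK hq).
have -> : col_of_mpoly q = 0.
  rewrite -[col_of_mpoly q](mulKmx unitV).
  rewrite (_ : monomial_mx V *m col_of_mpoly q = 0) ?mulmx0 //.
  by apply/matrixP => i j; rewrite ord1 monomial_mx_mul (col_of_mpolyK hq) qV mxE.
by apply/eqP; rewrite mpoly_of_col_eq0.
Qed.

Hypothesis infR : infinite_set [set: R].

Lemma exists_row_free_monomial_mx {k} :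
  (k <= N)%N -> exists V : k.-tuple (D.-tuple R), row_free (monomial_mx V).
Proof.
elim: k => [|k IH] kN.
  by exists [tuple]; apply: inj_row_free => v _; apply/rowP => -[].
have [V freeV] := IH (ltnW kN).
have [c c0 Vc] := wide_mx_kernel (monomial_mx V) kN.
have [w cw] : exists w, meval w (mpoly_of_col c) != 0.
  by apply: meval_nonroot infR _; rewrite mpoly_of_col_eq0.
exists (cons_tuple [tuple w l | l < D] V); rewrite monomial_mx_cons.
apply: (row_free_col_mx freeV Vc); apply: contra cw => /eqP/matrixP/(_ 0 0).
by rewrite monomial_mx_mul mxE (meval_eq _ (tnth_mktuple w)) => ->.
Qed.

Lemma exists_unit_monomial_mx :
  exists V : N.-tuple (D.-tuple R), monomial_mx V \in unitmx.
Proof.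
have [V] := exists_row_free_monomial_mx (leqnn N).
by rewrite row_free_unit; exists V.
Qed.

End monomial_matrix.

Arguments deg_monomials {D} n.
Arguments mpoly_of_col {D} n {R} c.

Arguments monomial_mx {D} n {R M} V.

Section determining.
Context {D n : nat} {R : realType}.
Local Notation N := (size (deg_monomials (D:=D) n)).

Lemma eval_line_pihomog p lam (v : D.-tuple R) : (msize p <= n.+1)%N ->
  eval_line p lam v = \sum_(k < n.+1) meval (tnth v) (pihomog mdeg k p) * lam ^+ k.
Proof.
move=> hp; rewrite /eval_line {1}(pihomog_partitionE hp) raddf_sum.
apply: eq_bigr => k _.
by rewrite /= (meval_homog_scale _ _ _ (pihomogP _ _ _)) mulrC.
Qed.

Lemma vanishes_on_lines_pihomog {M p} {V : M.-tuple (D.-tuple R)} :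
  (msize p <= n.+1)%N -> vanishes_on_lines p V ->
  forall (k : 'I_n.+1) i, meval (tnth (tnth V i)) (pihomog mdeg k p) = 0.
Proof.
move=> hp pV k i.
pose Q : {poly R} := \poly_(k < n.+1) meval (tnth (tnth V i)) (pihomog mdeg k p).
have : Q = 0.
  apply/eqP; apply: contraT => /(poly_nonroot (infinite_num R)) [x].
  by rewrite /root horner_poly -eval_line_pihomog // pV eqxx.
by move/polyP/(_ k); rewrite coef_poly ltn_ord coef0.
Qed.

Lemma determining_of_unit (i0 : 'I_D) (V : N.-tuple (D.-tuple R)) :
  monomial_mx n V \in unitmx -> determining n V.
Proof.
move=> unitV p hp; split=> [-> lam i|pV]; first by rewrite /eval_line meval0.
rewrite (pihomog_partitionE hp) big1 // => k _.
pose x := mpolyX R (mnm1 i0).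
have x0 : x != 0.
  apply/eqP => /(congr1 (mcoeff (mnm1 i0))).
  by rewrite mcoeffX eqxx mcoeff0 => /eqP; rewrite oner_eq0.
have hx : x ^+ (n - k) \is (n - k)%N.-homog.
  rewrite -[X in X.-homog]mul1n; apply: dhomogMn.
  by rewrite dhomogX; apply/eqP; exact: mdeg1.
have hk : pihomog mdeg k p * x ^+ (n - k) \is (k + (n - k))%N.-homog.
  exact: dhomogM (pihomogP _ _ _) hx.
rewrite (subnKC (ltnSE (ltn_ord k))) in hk.
have : pihomog mdeg k p * x ^+ (n - k) = 0.
  apply: (homog_eq0_monomial_mx unitV hk) => i.
  by rewrite mevalM (vanishes_on_lines_pihomog hp pV) mul0r.
by move/eqP; rewrite mulf_eq0 expf_eq0 (negbTE x0) andbF orbF => /eqP.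
Qed.

Lemma exists_vanishing_on_lines M (V : M.-tuple (D.-tuple R)) : (M < N)%N ->
  exists p : rpoly D R, p != 0 /\ msize_ p = n.+1 /\ vanishes_on_lines p V.
Proof.
move=> MN; have [c c0 Vc] := wide_mx_kernel (monomial_mx n V) MN.
have q0 : mpoly_of_col n c != 0 by rewrite mpoly_of_col_eq0.
exists (mpoly_of_col n c); split=> //; split.
  exact: msize_homog q0 (mpoly_of_col_homog c).
move=> lam i; rewrite /eval_line (meval_homog_scale _ _ _ (mpoly_of_col_homog c)).
by rewrite -monomial_mx_mul Vc mxE mulr0.
Qed.

End determining.

Lemma measurable_fun_ring_closed {dT : measure_display} {T : measurableType dT}
    {R : realType} : fun_ring_closed (fun f : T -> R => measurable_fun setT f).
Proof.
split=> [c|f g mf mg|f g mf mg]; first exact: measurable_cst.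
- exact: measurable_funD.
- exact: measurable_funM.
Qed.

Section almost_sure.
Context {D n : nat} {R : realType}.
Local Notation N := (size (deg_monomials (D:=D) n)).

Lemma ring_closed_det_monomial_mx (P : (N.-tuple (D.-tuple R) -> R) -> Prop) :
  fun_ring_closed P -> (forall i l, P (fun V => tnth (tnth V i) l)) ->
  P (fun V => \det (monomial_mx n V)).
Proof.
move=> closedP Ptnth; have [Pc _ PM] := closedP; rewrite /determinant.
apply: (fun_ring_closed_sum closedP) => s; apply: PM; first exact: Pc.
apply: (fun_ring_closed_prod closedP) => i.
under [fun V => _]funext do rewrite mxE mevalX.
apply: (fun_ring_closed_prod closedP) => l.
exact: (fun_ring_closed_exp closedP).
Qed.

Lemma measurable_det_monomial_mx :
  measurable_fun setT (fun V : N.-tuple (D.-tuple R) => \det (monomial_mx n V)).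
Proof.
apply: ring_closed_det_monomial_mx measurable_fun_ring_closed _ => i l.
exact: measurableT_comp (measurable_tnth l) (measurable_tnth i).
Qed.

Lemma sectional_det_monomial_mx :
  sectional (sectional (@polyfun R) D) N
    (fun V : N.-tuple (D.-tuple R) => \det (monomial_mx n V)).
Proof.
have closed_vec := sectional_ring_closed (@polyfun_ring_closed R) D.
apply: ring_closed_det_monomial_mx (sectional_ring_closed closed_vec N) _ => i l.
apply: (sectional_tnth closed_vec (fun w => tnth w l)).
exact: (sectional_tnth (@polyfun_ring_closed R) id l (polyfun_id R)).
Qed.

Lemma det_monomial_mx_null :
  inner_null (@lebesgue_mat R D N) [set V | \det (monomial_mx n V) = 0].
Proof.
have [V0 unitV0] := exists_unit_monomial_mx (D:=D) (n:=n) (infinite_num R).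
apply: (sectional_null_zeros (sectional_null_zeros (@polyfun_null_zeros R)))
  sectional_det_monomial_mx _.
by exists V0; rewrite -unitfE -unitmxE.
Qed.

Lemma ae_unit_monomial_mx {dO : measure_display} {Omega : measurableType dO}
    {P : probability Omega R} {X : Omega -> N.-tuple (D.-tuple R)} :
  measurable_fun setT X -> has_density P X (@lebesgue_mat R D N) ->
  {ae P, forall w, monomial_mx n (X w) \in unitmx}.
Proof.
move=> mX [f [_ [_ Pf]]].
pose Z := [set V : N.-tuple (D.-tuple R) | \det (monomial_mx n V) = 0].
have mZ : measurable Z.
  have := measurable_det_monomial_mx measurableT _ (measurable_set1 0).
  by rewrite setTI.
exists (X @^-1` Z); split.
- by have := mX measurableT Z mZ; rewrite setTI.
- by rewrite Pf //; apply: (integral_inner_null det_monomial_mx_null).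
- by move=> w /= /negP; rewrite unitmxE unitfE negbK => /eqP.
Qed.

End almost_sure.

Theorem theorem3p13 (R : realType) (d n : nat) (hd : (1 <= d)%N) :
  let N := 'C(n + d - 1, n) in
  (* (I) *)
  ((forall (dO : measure_display) (Omega : measurableType dO)
       (P : probability Omega R) (X : Omega -> N.-tuple (d.-tuple R)),
       measurable_fun setT X ->
       has_density P X (@lebesgue_mat R d N) ->
       {ae P, forall w, determining n (X w)})
   /\ (exists V : N.-tuple (d.-tuple R), determining n V))
  /\
  (* (II) *)
  (forall (M : nat), (M < N)%N -> forall V : M.-tuple (d.-tuple R),
     exists p : rpoly d R,
       p != 0 /\ msize_ p = n.+1 /\ vanishes_on_lines p V).
Proof.
case: d hd => [//|d] _.
rewrite (_ : 'C(n + d.+1 - 1, n) = size (deg_monomials (D:=d.+1) n)); last first.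
  by rewrite size_basis addnS subn1.
move=> N; split; [split|].
- move=> dO Omega P X mX dX; have := ae_unit_monomial_mx mX dX; apply: filterS => w.
  exact: determining_of_unit ord0 (X w).
- have [V unitV] := exists_unit_monomial_mx (D:=d.+1) (n:=n) (infinite_num R).
  by exists V; apply: determining_of_unit ord0 V unitV.
- by move=> M MN V; apply: exists_vanishing_on_lines.
Qed.
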